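(* Fix integers $m\ge d\ge1$, $\lambda=d/m$, and monic polynomials $p,q$ of degree $d$ with nonnegative real roots. Then $\mathbb E\big[\mathbb{S}(p\boxplus_{d,\lambda}q)\big]=\mathbb E[\mathbb{S}p]+\mathbb E[\mathbb{S}q]=0$ and $\mathrm{Var}\big[\mathbb{S}(p\boxplus_{d,\lambda}q)\big]=\mathrm{Var}[\mathbb{S}p]+\mathrm{Var}[\mathbb{S}q]$.
   Context: For a real-rooted polynomial $r$ with roots $r_1,\dots,r_n$ (with multiplicity), $\mathbb E(r)=\frac1n\sum_ir_i$ and $\mathrm{Var}(r)=\frac1n\sum_i(r_i-\mathbb E(r))^2$. $\mathbb{S}p(x)=p(x^2)$. $(p\boxplus_{d,\lambda}q)(x)=\sum_{k=0}^dx^{d-k}(-1)^k\sum_{i+j=k}\frac{(d-i)!(d-j)!}{d!(d-k)!}\frac{(m-i)!(m-j)!}{m!(m-k)!}a_ib_j$ for $p=\sum(-1)^ia_ix^{d-i}$, $q=\sum(-1)^ib_ix^{d-i}$; it is monic with nonnegative real roots. *)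

From HB Require Import structures.
From mathcomp Require Import all_boot all_order all_algebra.
From mathcomp Require Import reals.
Set Implicit Arguments. Unset Strict Implicit. Unset Printing Implicit Defensive.
Import Order.TTheory GRing.Theory Num.Theory.
Local Open Scope ring_scope.

Section Defs.
Variable R : realType.

(* [s] is a list of the roots (with multiplicity) of the monic polynomial [r],
   i.e. r = prod_{x in s} (X - x).  Order in s is irrelevant for E and Var. *)
Definition roots_list (r : {poly R}) (s : seq R) : Prop :=
  r = \prod_(x <- s) ('X - x%:P).

Definition monic_nonneg_rooted (d : nat) (p : {poly R}) : Prop :=
  exists s : seq R, [/\ size s = d, all (fun x => 0 <= x) s & roots_list p s].

Definition rmean (s : seq R) : R := (\sum_(x <- s) x) / (size s)%:R.
Definition rvar (s : seq R) : R :=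
  (\sum_(x <- s) (x - rmean s) ^+ 2) / (size s)%:R.

Definition Spoly (p : {poly R}) : {poly R} := p \Po 'X^2.

(* a_i with p = sum_i (-1)^i a_i x^(d-i) *)
Definition sgcoef (d : nat) (p : {poly R}) (i : nat) : R :=
  (-1) ^+ i * p`_(d - i).

Definition rect_conv (d m : nat) (p q : {poly R}) : {poly R} :=
  \sum_(k < d.+1)
    ((-1) ^+ k *
     \sum_(i < k.+1)
       (((d - i)`! * (d - (k - i))`!)%:R / ((d`! * (d - k)`!)%:R) *
        (((m - i)`! * (m - (k - i))`!)%:R / ((m`! * (m - k)`!)%:R)) *
        sgcoef d p i * sgcoef d q (k - i))) *: 'X^(d - k).

End Defs.

From HB Require Import structures.
From mathcomp Require Import all_boot all_order all_algebra.
From mathcomp Require Import reals.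
From mathcomp Require Import ring zify.
Set Implicit Arguments. Unset Strict Implicit. Unset Printing Implicit Defensive.
Import Order.TTheory GRing.Theory Num.Theory.
Local Open Scope ring_scope.

(* The roots of [Spoly P] are ±√r for the roots r of [P]: they come in opposite
   pairs. *)

Lemma coefPn2_prod_XsubC (R : comNzRingType) (s : seq R) : (1 < size s)%N ->
  (\prod_(x <- s) ('X - x%:P))`_(size s).-2 *+ 2 =
  (\sum_(x <- s) x) ^+ 2 - \sum_(x <- s) x ^+ 2.
Proof.
case sizeE: (size s) => [|[|n]] // _ /=.
elim: s n sizeE => [|x t IH] n //= [sizeE].
rewrite !big_cons mulrBl coefB coefXM coefCM.
case: n sizeE => [|n] sizeE.
  case: t {IH} sizeE => [|y [|]] // _.
  rewrite !big_cons !big_nil /= mulr1 coefB coefX coefC /=.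
  ring.
have := @coefPn_prod_XsubC _ t; rewrite sizeE /= => ->//.
rewrite mulrnBl (IH n sizeE); ring.
Qed.

Section SquareRootPolynomial.
Variable R : realType.
Implicit Types (P : {poly R}) (s : seq R).

Lemma coef_Spoly P i :
  (Spoly P)`_i = if (2 %| i)%N then P`_(i %/ 2) else 0.
Proof. exact: coef_comp_poly_Xn. Qed.

Lemma size_Spoly_roots P s : roots_list (Spoly P) s ->
  size s = ((size P).-1).*2.
Proof.
rewrite /roots_list => sE; have := size_comp_poly P 'X^2.
by rewrite -/(Spoly P) sE size_prod_XsubC size_polyXn -muln2.
Qed.

Lemma sum_Spoly_roots P s : roots_list (Spoly P) s -> \sum_(x <- s) x = 0.
Proof.
rewrite /roots_list => sE; have := size_Spoly_roots sE.
case: s sE => [|x s] sE sizeE; first by rewrite big_nil.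
apply/eqP; rewrite -oppr_eq0 -coefPn_prod_XsubC // -sE coef_Spoly.
rewrite sizeE dvdn2; case: (size P).-1 sizeE => [|k] // _.
by rewrite doubleS /= odd_double.
Qed.

Lemma sum_sqr_Spoly_roots P s : (1 < size P)%N -> roots_list (Spoly P) s ->
  \sum_(x <- s) x ^+ 2 = - (P`_(size P).-2 *+ 2).
Proof.
rewrite /roots_list => P_gt1 sE; have sizeE := size_Spoly_roots sE.
have s_gt1 : (1 < size s)%N by rewrite sizeE; case: (size P) P_gt1 => [|[|k]].
have := coefPn2_prod_XsubC s_gt1.
rewrite (sum_Spoly_roots sE) expr0n /= sub0r -sE coef_Spoly sizeE.
case: (size P) P_gt1 => [|[|k]] //= _.
by rewrite dvdn2 odd_double -muln2 mulnK // => ->; rewrite opprK.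
Qed.

Lemma rmean_Spoly_roots P s : roots_list (Spoly P) s -> rmean s = 0.
Proof. by move=> /sum_Spoly_roots; rewrite /rmean => ->; rewrite mul0r. Qed.

Lemma rvar_Spoly_roots P s : roots_list (Spoly P) s ->
  rvar s = - P`_(size P).-2 / (size P).-1%:R.
Proof.
move=> sE; rewrite /rvar (rmean_Spoly_roots sE) (size_Spoly_roots sE).
under eq_bigr do rewrite subr0.
case: (ltnP 1 (size P)) => [P_gt1|]; last first.
  by case: (size P) => [|[|]] //; rewrite !invr0 !mulr0.
rewrite (sum_sqr_Spoly_roots P_gt1 sE) -muln2 natrM.
have n_neq0 : (size P).-1%:R != 0 :> R by rewrite pnatr_eq0 -lt0n; lia.
by field.
Qed.

End SquareRootPolynomial.

Lemma natr_factM_neq0 (R : numDomainType) a b : (a`! * b`!)%:R != 0 :> R.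
Proof. by rewrite pnatr_eq0 muln_eq0 negb_or -!lt0n !fact_gt0. Qed.

Section RectangularConvolution.
Variables (R : realType) (d m : nat) (p q : {poly R}).

Let r := rect_conv d m p q.

Lemma rect_conv_coef_gt j : (d < j)%N -> r`_j = 0.
Proof.
move=> d_lt_j; rewrite coef_sumMXn big1 // => k /eqP k_j; lia.
Qed.

Lemma rect_conv_coef_top : r`_d = p`_d * q`_d.
Proof.
rewrite coef_sumMXn (eq_bigl (pred1 ord0)) => [|k]; last first.
  apply/eqP/eqP => [kE|->]; last by rewrite subn0.
  by apply/val_inj; have := ltn_ord k; rewrite /= in kE *; lia.
rewrite big_pred1_eq big_ord1 /sgcoef !subn0 !expr0 !mul1r.
by rewrite !divff ?natr_factM_neq0 ?mul1r.
Qed.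

Lemma rect_conv_coef_subtop : (0 < d)%N ->
  r`_d.-1 = p`_d.-1 * q`_d + p`_d * q`_d.-1.
Proof.
move=> d_gt0; rewrite coef_sumMXn (eq_bigl (pred1 (inord 1))) => [|k]; last first.
  apply/eqP/eqP => [kE|->]; first apply/val_inj;
    have := ltn_ord k; rewrite /= inordK // ?kE; lia.
rewrite big_pred1_eq inordK // !big_ord_recl big_ord0 addr0 /= /sgcoef /bump /=.
rewrite !subn0 !subn1 (mulnC (d.-1)`!) (mulnC (m.-1)`!).
by rewrite !divff ?natr_factM_neq0 //; ring.
Qed.

Lemma size_rect_conv : p`_d * q`_d != 0 -> size r = d.+1.
Proof.
move=> top_neq0; apply/anti_leq/andP; split.
  by apply/leq_sizeP => j /rect_conv_coef_gt.
rewrite ltnNge; apply/negP => /leq_sizeP /(_ d (leqnn d)) /eqP.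
by rewrite rect_conv_coef_top (negbTE top_neq0).
Qed.

End RectangularConvolution.

Lemma monic_nonneg_rooted_coef (R : realType) d (p : {poly R}) :
  monic_nonneg_rooted d p -> size p = d.+1 /\ p`_d = 1.
Proof.
case=> s [<- _ ->]; rewrite size_prod_XsubC; split=> //.
by have := lead_coef_prod_XsubC s predT id; rewrite /lead_coef size_prod_XsubC.
Qed.

Theorem mainTheorem11 (R : realType) (d m : nat) (p q : {poly R}) :
  (1 <= d)%N -> (d <= m)%N ->
  monic_nonneg_rooted d p -> monic_nonneg_rooted d q ->
  forall sp sq s : seq R,
    roots_list (Spoly p) sp -> roots_list (Spoly q) sq ->
    roots_list (Spoly (rect_conv d m p q)) s ->
    [/\ rmean s = rmean sp + rmean sq,
        rmean sp + rmean sq = 0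
      & rvar s = rvar sp + rvar sq].
Proof.
move=> d_gt0 _ /monic_nonneg_rooted_coef[size_p p_d]
  /monic_nonneg_rooted_coef[size_q q_d] sp sq s spE sqE sE.
rewrite !(rmean_Spoly_roots spE, rmean_Spoly_roots sqE, rmean_Spoly_roots sE).
rewrite !(rvar_Spoly_roots spE, rvar_Spoly_roots sqE, rvar_Spoly_roots sE).
rewrite size_rect_conv; last by rewrite p_d q_d mulr1 oner_eq0.
rewrite size_p size_q rect_conv_coef_subtop // p_d q_d mulr1 mul1r addr0.
by split=> //; rewrite opprD mulrDl.
Qed.
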